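(* Let $1\leq s\leq r\leq n$ and $d=n+r+2$. Then the locally closed locus $X^{n,r,s}$ is irreducible.
   Context: $\mathbb{K}$ is algebraically closed of characteristic zero. $X^{n,r,s}$ is the set of $n$-tuples $(A_1,\dots,A_n)$ of pairwise commuting $d\times d$ matrices over $\mathbb{K}$ for which there is a basis of $\mathbb{K}^d$ in which each $A_i$ has the block form $$A_i=\begin{bmatrix}0 & b_i^T & c_i^T & 0\\ 0&0&D_i&0\\ 0&0&0&f_i\\ 0&0&0&0\end{bmatrix}$$ with diagonal blocks of sizes $1,r,n,1$, where $b_i\in\mathbb{K}^r$, $c_i,f_i\in\mathbb{K}^n$, $D_i\in\mathbb{K}^{r\times n}$, such that $f_1,\dots,f_n$ are linearly independent, the matrices $D_1,\dots,D_n$ have trivial common cokernel (i.e. $\bigcap_i\ker D_i^T=0$), and $\dim_{\mathbb{K}}\operatorname{Span}\{b_1,\dots,b_n\}=s$. *)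

From HB Require Import structures.
From mathcomp Require Import all_boot all_order all_algebra.
Set Implicit Arguments. Unset Strict Implicit. Unset Printing Implicit Defensive.
Import GRing.Theory.
Local Open Scope ring_scope.

(* Tuples (A_1,...,A_n) of m x m matrices: points of the affine space K^(n*m*m). *)
Definition mxtuple (K : fieldType) (n m : nat) := 'I_n -> 'M[K]_m.

Inductive polyfun (K : fieldType) (n m : nat) : (mxtuple K n m -> K) -> Prop :=
| pf_const (c : K) : polyfun (fun _ => c)
| pf_coord (i : 'I_n) (j k : 'I_m) : polyfun (fun A => A i j k)
| pf_add f g : polyfun f -> polyfun g -> polyfun (fun A => f A + g A)
| pf_mul f g : polyfun f -> polyfun g -> polyfun (fun A => f A * g A).

Definition zariski_closed (K : fieldType) (n m : nat) (Z : mxtuple K n m -> Prop) :=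
  exists F : (mxtuple K n m -> K) -> Prop,
    (forall f, F f -> polyfun f) /\
    (forall A, Z A <-> (forall f, F f -> f A = 0)).

Definition zariski_irreducible (K : fieldType) (n m : nat) (S : mxtuple K n m -> Prop) :=
  (exists A, S A) /\
  forall Z1 Z2 : mxtuple K n m -> Prop, zariski_closed Z1 -> zariski_closed Z2 ->
    (forall A, S A -> Z1 A \/ Z2 A) ->
    (forall A, S A -> Z1 A) \/ (forall A, S A -> Z2 A).

(* The block matrix with diagonal blocks of sizes 1, r, n, 1:
     [ 0  b^T  c^T  0 ]
     [ 0   0    D   0 ]
     [ 0   0    0   f ]
     [ 0   0    0   0 ]
   of size (1 + r) + (n + 1) = n + r + 2.  Here bT = b^T is a row, cT = c^T. *)
Definition blockform (K : fieldType) (n r : nat)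
  (bT : 'rV[K]_r) (cT : 'rV[K]_n) (D : 'M[K]_(r, n)) (f : 'cV[K]_n)
  : 'M[K]_((1 + r) + (n + 1)) :=
  block_mx (block_mx 0 bT 0 0 : 'M_(1 + r, 1 + r))
           (block_mx cT 0 D 0 : 'M_(1 + r, n + 1))
           0
           (block_mx 0 f 0 0 : 'M_(n + 1, n + 1)).

Definition Xnrs (K : fieldType) (n r s : nat)
  (A : mxtuple K n ((1 + r) + (n + 1))) : Prop :=
  (forall i j, A i *m A j = A j *m A i) /\
  exists (P : 'M[K]_((1 + r) + (n + 1))) (bT : 'I_n -> 'rV[K]_r)
         (cT : 'I_n -> 'rV[K]_n) (D : 'I_n -> 'M[K]_(r, n)) (f : 'I_n -> 'cV[K]_n),
    [/\ P \in unitmx,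
        forall i, A i = P *m blockform (bT i) (cT i) (D i) (f i) *m invmx P,
        row_free (\matrix_(i < n) (f i)^T),
        (forall v : 'rV[K]_r, (forall i, v *m D i = 0) -> v = 0) &
        \rank (\matrix_(i < n) bT i) = s].

From HB Require Import structures.
From mathcomp Require Import all_boot all_order all_algebra.
From mathcomp Require Import ring.
From Stdlib Require Import Classical FunctionalExtensionality.
Set Implicit Arguments. Unset Strict Implicit. Unset Printing Implicit Defensive.
Import GRing.Theory.
Local Open Scope ring_scope.

(* Up to a change of basis P and an invertible recombination A_i |-> sum_k G_ik A_k of
   the tuple, the vectors b_i become the rows of the partial identity of rank s and the
   f_i the standard basis.  Hence X^{n,r,s} is the image of the parameters (P, G, c, D)
   with P, G invertible, (c, D) in the space cut out by the commutation relations (which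
   are linear in (c, D) once b and f are normalised) and the D_l without common
   cokernel: a nonempty open subset of an affine space.  Two
   admissible parameters are joined by a line that stays admissible off finitely many
   points, and its image is a rational curve through the two given points of X^{n,r,s}.
   A nonempty set in which any two points lie on such a curve is irreducible: a
   polynomial that is nonzero at an endpoint restricts to a nonzero rational function
   on the curve, and an algebraically closed field is infinite. *)

Section RationalCurves.
Variables (K : fieldType) (n m : nat).
Implicit Types (N : 'I_n -> 'M[{poly K}]_m) (p q : {poly K}) (S Z : mxtuple K n m -> Prop).

Definition rat_curve N p (t : K) : mxtuple K n m :=
  fun i => p.[t]^-1 *: map_mx (horner_eval t) (N i).

Lemma polyfun_rat_curve N p f : polyfun f ->
  exists (R : {poly K}) (k : nat),
    forall t, p.[t] != 0 -> f (rat_curve N p t) = R.[t] / p.[t] ^+ k.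
Proof.
elim=> {f} [c | i j l | f g _ [R [k fE]] _ [R' [k' gE]] | f g _ [R [k fE]] _ [R' [k' gE]]].
- by exists c%:P, 0%N => t _; rewrite hornerC divr1.
- by exists (N i j l), 1%N => t _; rewrite !mxE horner_evalE mulrC.
- exists (R * p ^+ k' + R' * p ^+ k), (k + k')%N => t pt.
  rewrite fE // gE // hornerD !hornerM !horner_exp exprD.
  by field; rewrite !expf_neq0.
- exists (R * R'), (k + k')%N => t pt.
  rewrite fE // gE // hornerM exprD.
  by field; rewrite !expf_neq0.
Qed.

Definition rat_curve_joins S (a b : mxtuple K n m) :=
  exists N p q, [/\ q.[0] != 0, q.[1] != 0,
    a = rat_curve N p 0, b = rat_curve N p 1 &
    forall t, q.[t] != 0 -> p.[t] != 0 /\ S (rat_curve N p t)].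

Lemma zariski_closed_witness Z a : zariski_closed Z -> ~ Z a ->
  exists2 f, polyfun f & f a != 0 /\ forall A, Z A -> f A = 0.
Proof.
case=> F [polyF ZE] Za.
have [f /(imply_to_and (F f))[Ff fa]] : exists f, ~ (F f -> f a = 0).
  by apply: not_all_ex_not => Fa; apply/Za/ZE.
exists f; first exact: polyF.
by split=> [|A /ZE]; [exact/eqP | exact].
Qed.

End RationalCurves.

Lemma irreducible_of_rat_curves (K : closedFieldType) n m (S : mxtuple K n m -> Prop) :
  (exists A, S A) -> (forall a b, S a -> S b -> rat_curve_joins S a b) ->
  zariski_irreducible S.
Proof.
move=> S_ne join; split=> // Z1 Z2 Z1closed Z2closed SZ.
apply: NNPP => /not_or_and[/not_all_ex_not[a /(imply_to_and (S a))[Sa Z1a]]].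
move=> /not_all_ex_not[b /(imply_to_and (S b))[Sb Z2b]].
have [f1 f1poly [f1a f1Z]] := zariski_closed_witness Z1closed Z1a.
have [f2 f2poly [f2b f2Z]] := zariski_closed_witness Z2closed Z2b.
have [N [p [q [q0 q1 aE bE onS]]]] := join a b Sa Sb.
have [[p0 _] [p1 _]] := (onS 0 q0, onS 1 q1).
have q_neq0 : q != 0 by apply: contraNneq q0 => ->; rewrite horner0.
have [R1 [k1 f1E]] := polyfun_rat_curve N p f1poly.
have [R2 [k2 f2E]] := polyfun_rat_curve N p f2poly.
have R1_neq0 : R1 != 0.
  by apply: contraNneq f1a => R1_0; rewrite aE f1E // R1_0 horner0 mul0r.
have R2_neq0 : R2 != 0.
  by apply: contraNneq f2b => R2_0; rewrite bE f2E // R2_0 horner0 mul0r.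
have [x] := closed_nonrootP (R1 * R2 * q) (mulf_neq0 (mulf_neq0 R1_neq0 R2_neq0) q_neq0).
rewrite /root !hornerM !mulf_eq0 !negb_or => /andP[/andP[R1x R2x] qx].
have [px Sx] := onS x qx.
have quot_neq0 R k : R.[x] != 0 -> R.[x] / p.[x] ^+ k != 0.
  by move=> Rx; rewrite mulf_neq0 ?invr_eq0 ?expf_neq0.
case: (SZ _ Sx) => [/f1Z | /f2Z]; [rewrite f1E | rewrite f2E] => //; apply/eqP; exact: quot_neq0.
Qed.

Section MatrixCombinations.
Variables (R : comPzRingType) (n : nat).

Definition mxcomb p q (G : 'M[R]_n) (X : 'I_n -> 'M[R]_(p, q)) : 'I_n -> 'M[R]_(p, q) :=
  fun i => \sum_k G i k *: X k.

Lemma mxcomb_mulmx_sym p q l (G : 'M[R]_n) (X : 'I_n -> 'M[R]_(p, q)) (Y : 'I_n -> 'M[R]_(q, l)) :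
  (forall k k', X k *m Y k' = X k' *m Y k) ->
  forall i j, mxcomb G X i *m mxcomb G Y j = mxcomb G X j *m mxcomb G Y i.
Proof.
have expand i j : mxcomb G X i *m mxcomb G Y j = \sum_k \sum_k' (G i k * G j k') *: (X k *m Y k').
  rewrite mulmx_suml; apply: eq_bigr => k _; rewrite mulmx_sumr; apply: eq_bigr => k' _.
  by rewrite -scalemxAl -scalemxAr scalerA.
move=> XY i j; rewrite !expand [RHS]exchange_big /=.
by apply: eq_bigr => k _; apply: eq_bigr => k' _; rewrite XY mulrC.
Qed.

Lemma mxcombM p q (U V : 'M[R]_n) (X : 'I_n -> 'M[R]_(p, q)) :
  mxcomb U (mxcomb V X) = mxcomb (U *m V) X.
Proof.
apply: functional_extensionality => i; rewrite /mxcomb.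
under eq_bigr do rewrite scaler_sumr.
rewrite exchange_big; apply: eq_bigr => k _; rewrite mxE scaler_suml.
by apply: eq_bigr => j _; rewrite scalerA.
Qed.

Lemma mxcomb1 p q (X : 'I_n -> 'M[R]_(p, q)) : mxcomb 1%:M X = X.
Proof.
apply: functional_extensionality => i; rewrite /mxcomb (bigD1 i) //= mxE eqxx scale1r.
by rewrite big1 ?addr0 // => k /negPf ki; rewrite mxE eq_sym ki scale0r.
Qed.

Lemma mxcomb_rows q (G : 'M[R]_n) (X : 'I_n -> 'rV[R]_q) :
  \matrix_i mxcomb G X i = G *m \matrix_i X i.
Proof.
by apply/matrixP => i j; rewrite !mxE summxE; apply: eq_bigr => k _; rewrite !mxE.
Qed.

Lemma trmx_mxcomb p q (G : 'M[R]_n) (X : 'I_n -> 'M[R]_(p, q)) i :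
  (mxcomb G X i)^T = mxcomb G (fun k => (X k)^T) i.
Proof. by rewrite /mxcomb linear_sum; apply: eq_bigr => k _; rewrite linearZ. Qed.

Lemma mulmx_mxcomb p q l (A : 'M[R]_(l, p)) (G : 'M[R]_n) (X : 'I_n -> 'M[R]_(p, q)) i :
  A *m mxcomb G X i = mxcomb G (fun k => A *m X k) i.
Proof. by rewrite /mxcomb mulmx_sumr; apply: eq_bigr => k _; rewrite scalemxAr. Qed.

End MatrixCombinations.

Lemma map_mxcomb (R S : comPzRingType) (phi : {rmorphism R -> S}) n p q
    (G : 'M[R]_n) (X : 'I_n -> 'M[R]_(p, q)) i :
  map_mx phi (mxcomb G X i) = mxcomb (map_mx phi G) (fun k => map_mx phi (X k)) i.
Proof.
apply/matrixP => u v; rewrite !mxE !summxE rmorph_sum; apply: eq_bigr => k _.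
by rewrite !mxE rmorphM.
Qed.

Section BlockForms.
Variables (K : fieldType) (n r : nat).
Implicit Types (b : 'I_n -> 'rV[K]_r) (c : 'I_n -> 'rV[K]_n) (D : 'I_n -> 'M[K]_(r, n))
  (f : 'I_n -> 'cV[K]_n).

Lemma blockform_mul (b b' : 'rV[K]_r) (c c' : 'rV[K]_n) (D D' : 'M[K]_(r, n))
    (f f' : 'cV[K]_n) :
  blockform b c D f *m blockform b' c' D' f' =
  block_mx 0 (block_mx (b *m D') (c *m f') 0 (D *m f')) 0 0.
Proof.
rewrite /blockform !mulmx_block ?mulmx0 ?mul0mx ?addr0 ?add0r.
by rewrite block_mx0 add_block_mx !addr0 !add0r block_mx0.
Qed.

Definition commuting_data b c D f :=
  forall i j, [/\ b i *m D j = b j *m D i, c i *m f j = c j *m f i & D i *m f j = D j *m f i].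

Lemma blockform_commP b c D f :
  (forall i j, blockform (b i) (c i) (D i) (f i) *m blockform (b j) (c j) (D j) (f j)
             = blockform (b j) (c j) (D j) (f j) *m blockform (b i) (c i) (D i) (f i))
  <-> commuting_data b c D f.
Proof.
split=> comm i j.
- move: (comm i j); rewrite !blockform_mul => /eq_block_mx[_ + _ _].
  by case/eq_block_mx.
- by case: (comm i j) => bD cf Df; rewrite !blockform_mul bD cf Df.
Qed.

Lemma commuting_data_mxcomb G b c D f : G \in unitmx ->
  commuting_data (mxcomb G b) (mxcomb G c) (mxcomb G D) (mxcomb G f) <-> commuting_data b c D f.
Proof.
have comb G' b' c' D' f' : commuting_data b' c' D' f' ->
    commuting_data (mxcomb G' b') (mxcomb G' c') (mxcomb G' D') (mxcomb G' f').
  by move=> comm i j; split; apply: mxcomb_mulmx_sym => k l; case: (comm k l).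
move=> G_unit; split; last exact: comb.
by move/(comb (invmx G)); rewrite !mxcombM mulVmx // !mxcomb1.
Qed.

Definition diag_blockmx (H : 'M[K]_r) (M : 'M[K]_n) : 'M[K]_((1 + r) + (n + 1)) :=
  block_mx (block_mx 1%:M 0 0 H) 0 0 (block_mx M 0 0 1%:M).

Lemma diag_blockmx_unit H M :
  H \in unitmx -> M \in unitmx -> diag_blockmx H M \in unitmx.
Proof.
by move=> H_unit M_unit; rewrite unitmxE !det_ublock !det1 mul1r mulr1 unitrM -!unitmxE H_unit.
Qed.

Lemma diag_blockmx_conj H M (b b' : 'rV[K]_r) (c c' : 'rV[K]_n) (D D' : 'M[K]_(r, n))
    (f f' : 'cV[K]_n) :
  b' = b *m H -> c' = c *m M -> H *m D' = D *m M -> M *m f' = f ->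
  diag_blockmx H M *m blockform b' c' D' f' = blockform b c D f *m diag_blockmx H M.
Proof.
move=> -> -> HD Mf; rewrite /diag_blockmx /blockform !mulmx_block.
by rewrite ?mulmx1 ?mul1mx ?mulmx0 ?mul0mx ?addr0 ?add0r HD Mf.
Qed.

Definition trivial_cokernel q (D : 'I_n -> 'M[K]_(r, q)) :=
  forall v : 'rV_r, (forall l, v *m D l = 0) -> v = 0.

Lemma trivial_cokernel_row_free q (D : 'I_n -> 'M[K]_(r, q)) :
  trivial_cokernel D <-> row_free (\mxrow_l D l).
Proof.
have vD0 v : (forall l, v *m D l = 0) <-> v *m \mxrow_l D l = 0.
  by rewrite mul_mxrow -mxrow0; apply: eq_mxrowP.
split=> [cokD | /row_freeP[W DW] v /vD0 vD].
  by apply: inj_row_free => v /vD0 /cokD.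
by rewrite -[v]mulmx1 -DW mulmxA vD mul0mx.
Qed.

Lemma trivial_cokernel_mxcomb q G (D : 'I_n -> 'M[K]_(r, q)) :
  G \in unitmx -> trivial_cokernel D -> trivial_cokernel (mxcomb G D).
Proof.
move=> G_unit cokD v vD; apply: cokD => k.
have -> : v *m D k = mxcomb (invmx G) (mxcomb G (fun l => v *m D l)) k.
  by rewrite mxcombM mulVmx // mxcomb1.
by rewrite {1}/mxcomb big1 // => l _; rewrite -mulmx_mxcomb vD scaler0.
Qed.

Lemma trivial_cokernel_mulmx q H M (D : 'I_n -> 'M[K]_(r, q)) :
  H \in unitmx -> M \in unitmx -> trivial_cokernel D ->
  trivial_cokernel (fun l => H *m D l *m M).
Proof.
move=> H_unit M_unit cokD v vD; rewrite -[v](mulmxK H_unit) (cokD (v *m H)) ?mul0mx // => l.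
have := vD l; rewrite !mulmxA => vHDM.
by rewrite -(mulmxK M_unit (v *m H *m D l)) vHDM mul0mx.
Qed.

End BlockForms.

Lemma conj_commP (K : fieldType) n m (P : 'M[K]_m) (B : 'I_n -> 'M[K]_m) : P \in unitmx ->
  (forall i j, (P *m B i *m invmx P) *m (P *m B j *m invmx P) =
               (P *m B j *m invmx P) *m (P *m B i *m invmx P))
  <-> (forall i j, B i *m B j = B j *m B i).
Proof.
move=> P_unit; have conjM X Y : (P *m X *m invmx P) *m (P *m Y *m invmx P) = P *m (X *m Y) *m invmx P.
  by rewrite !mulmxA mulmxKV // -!mulmxA.
have conjK X : invmx P *m (P *m X *m invmx P) *m P = X.
  by rewrite !mulmxA mulVmx // mul1mx mulmxKV.
split=> comm i j; last by rewrite !conjM comm.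
by rewrite -[LHS]conjK -[RHS]conjK -!conjM comm.
Qed.

Section NormalForm.
Variables (K : fieldType) (n r s : nat).
Local Notation d := ((1 + r) + (n + 1))%N.

Definition std_b : 'I_n -> 'rV[K]_r := fun k => row k (pid_mx s).
Definition std_f : 'I_n -> 'cV[K]_n := fun k => delta_mx k 0.

Lemma std_b_rows : \matrix_k std_b k = pid_mx s.
Proof. by apply/row_matrixP => k; rewrite rowK. Qed.

Lemma std_f_rows : \matrix_k (std_f k)^T = 1%:M.
Proof. by apply/matrixP => i j; rewrite !mxE eqxx andbT eq_sym. Qed.

Definition Xparam (P : 'M[K]_d) (G : 'M[K]_n) (c : 'I_n -> 'rV[K]_n) (D : 'I_n -> 'M[K]_(r, n))
    : mxtuple K n d :=
  fun i => P *m blockform (mxcomb G std_b i) (mxcomb G c i) (mxcomb G D i) (mxcomb G std_f i)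
             *m invmx P.

Lemma Xparam_commP P G c D : P \in unitmx -> G \in unitmx ->
  (forall i j, Xparam P G c D i *m Xparam P G c D j = Xparam P G c D j *m Xparam P G c D i)
  <-> commuting_data std_b c D std_f.
Proof.
move=> P_unit G_unit; rewrite -(commuting_data_mxcomb _ _ _ _ G_unit) -blockform_commP.
exact: (conj_commP (fun i => blockform (mxcomb G std_b i) (mxcomb G c i) (mxcomb G D i)
                                      (mxcomb G std_f i)) P_unit).
Qed.

Lemma std_f_mxcomb_rows G : \matrix_i (mxcomb G std_f i)^T = G.
Proof.
rewrite -[RHS]mulmx1 -std_f_rows -mxcomb_rows.
by apply/row_matrixP => i; rewrite !rowK trmx_mxcomb.
Qed.

Lemma Xparam_Xnrs P G c D : (s <= r)%N -> (s <= n)%N -> P \in unitmx -> G \in unitmx ->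
  commuting_data std_b c D std_f -> trivial_cokernel D -> Xnrs s (Xparam P G c D).
Proof.
move=> sr sn P_unit G_unit comm cokD; split; first exact/Xparam_commP.
exists P, (mxcomb G std_b), (mxcomb G c), (mxcomb G D), (mxcomb G std_f); split=> //.
- by rewrite std_f_mxcomb_rows row_free_unit.
- exact: trivial_cokernel_mxcomb.
- by rewrite mxcomb_rows std_b_rows (eqmxMfull _ _) ?row_full_unit // rank_pid_mx.
Qed.

Lemma b_f_normal_form (b : 'I_n -> 'rV[K]_r) (f : 'I_n -> 'cV[K]_n) :
  \rank (\matrix_i b i) = s -> row_free (\matrix_i (f i)^T) ->
  exists G H M, [/\ G \in unitmx, H \in unitmx, M \in unitmx,
    forall i, mxcomb G std_b i = b i *m H & forall i, M *m mxcomb G std_f i = f i].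
Proof.
move=> rank_b f_free; set B := \matrix_i b i; set F := \matrix_i (f i)^T.
have F_unit : F \in unitmx by rewrite -row_free_unit.
have G_unit := col_ebase_unit B; have H_unit := row_ebase_unit B.
have BE : col_ebase B *m pid_mx s *m row_ebase B = B by rewrite -rank_b mulmx_ebase.
exists (col_ebase B), (invmx (row_ebase B)), (invmx (col_ebase B) *m F)^T.
split; [done | by rewrite unitmx_inv | by rewrite unitmx_tr unitmx_mul unitmx_inv G_unit | |].
- move=> i; have rowsE : \matrix_i mxcomb (col_ebase B) std_b i = B *m invmx (row_ebase B).
    by rewrite mxcomb_rows std_b_rows -(mulmxK H_unit (_ *m pid_mx s)) BE.
  by rewrite -[LHS](rowK (mxcomb _ std_b) i) rowsE row_mul rowK.
- move=> i; have rowsE : \matrix_i (mxcomb (col_ebase B) std_f i)^T *m (invmx (col_ebase B) *m F) = F.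
    by rewrite std_f_mxcomb_rows mulKVmx.
  apply: trmx_inj; rewrite trmx_mul trmxK.
  by rewrite -[(f i)^T](rowK (fun i => (f i)^T)) -/F -[in RHS]rowsE row_mul rowK.
Qed.

Lemma Xnrs_Xparam A : Xnrs s A -> exists P G c D,
  [/\ P \in unitmx, G \in unitmx, commuting_data std_b c D std_f, trivial_cokernel D &
      A = Xparam P G c D].
Proof.
case=> commA [P [b [c [D [f [P_unit AE f_free cokD rank_b]]]]]].
have [G [H [M [G_unit H_unit M_unit bE fE]]]] := b_f_normal_form rank_b f_free.
set Q := diag_blockmx H M.
have PQ_unit : P *m Q \in unitmx by rewrite unitmx_mul P_unit diag_blockmx_unit.
set c' := mxcomb (invmx G) (fun i => c i *m M).
set D' := mxcomb (invmx G) (fun i => invmx H *m D i *m M).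
have comb_invK p q (X : 'I_n -> 'M[K]_(p, q)) : mxcomb G (mxcomb (invmx G) X) = X.
  by rewrite mxcombM mulmxV // mxcomb1.
have AE' : A = Xparam (P *m Q) G c' D'.
  apply: functional_extensionality => i.
  rewrite /Xparam !comb_invK /= -[A i](mulmxK PQ_unit) AE; congr (_ *m _).
  have HD : H *m (invmx H *m D i *m M) = D i *m M by rewrite !mulmxA mulmxV // mul1mx.
  rewrite mulmxA mulmxKV // -mulmxA /Q.
  by rewrite (diag_blockmx_conj (bE i) erefl HD (fE i)) mulmxA.
exists (P *m Q), G, c', D'; split=> //.
- by apply/(Xparam_commP _ _ PQ_unit G_unit); rewrite -AE'.
- apply: trivial_cokernel_mxcomb; rewrite ?unitmx_inv //.
  by apply: trivial_cokernel_mulmx; rewrite ?unitmx_inv.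
Qed.

Definition std_D : 'I_n -> 'M[K]_(r, n) :=
  fun l => \matrix_(a, j) ((a == l :> nat) && (j == l))%:R.

Lemma std_D_commuting : commuting_data std_b (fun _ => 0) std_D std_f.
Proof.
move=> i j; have [<- | i_neq_j] := eqVneq i j; first by [].
have j_neq_i : j != i by rewrite eq_sym.
have no_path (x y : 'I_n) (a : 'I_r) : x != y -> ((x == a :> nat) && (a == y :> nat)) = false.
  move=> /negPf; apply: contraFF => /andP[/eqP xa /eqP ay].
  by apply/eqP/val_inj; rewrite /= xa ay.
split; [apply/rowP => k | by rewrite !mul0mx | rewrite -!colE; apply/colP => a].
- by rewrite !mxE !big1 // => a _; rewrite !mxE -natrM mulnb andbACA no_path.
- by rewrite !mxE (negPf i_neq_j) (negPf j_neq_i) !andbF.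
Qed.

Lemma std_D_cokernel : (r <= n)%N -> trivial_cokernel std_D.
Proof.
move=> rn v vD; apply/rowP => a; have /rowP/(_ (widen_ord rn a)) := vD (widen_ord rn a).
rewrite !mxE (bigD1 a) //= !mxE !eqxx mulr1 big1 ?addr0 // => a' a'a.
by rewrite !mxE eqxx andbT -[_ == _ :> nat]/(a' == a) (negPf a'a) mulr0.
Qed.

Lemma Xnrs_nonempty : (s <= r)%N -> (r <= n)%N -> exists A : mxtuple K n d, Xnrs s A.
Proof.
move=> sr rn; exists (Xparam 1%:M 1%:M (fun _ => 0) std_D).
apply: Xparam_Xnrs => //; rewrite ?unitmx1 //.
- exact: leq_trans rn.
- exact: std_D_commuting.
- exact: std_D_cokernel.
Qed.

End NormalForm.

Arguments std_b {K n r} s _.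
Arguments std_f {K n} _.
Arguments std_D {K n r} _.

Section Segments.
Variable K : fieldType.

Definition lerp p q (t : K) (x y : 'M[K]_(p, q)) := (1 - t) *: x + t *: y.

Definition lerpf n p q (t : K) (X Y : 'I_n -> 'M[K]_(p, q)) := fun k => lerp t (X k) (Y k).

Definition segment p q (x y : 'M[K]_(p, q)) : 'M[{poly K}]_(p, q) :=
  (1 - 'X) *: map_mx polyC x + 'X *: map_mx polyC y.

Lemma lerp0 p q (x y : 'M[K]_(p, q)) : lerp 0 x y = x.
Proof. by rewrite /lerp subr0 scale1r scale0r addr0. Qed.

Lemma lerp1 p q (x y : 'M[K]_(p, q)) : lerp 1 x y = y.
Proof. by rewrite /lerp subrr scale0r add0r scale1r. Qed.

Lemma lerpf0 n p q (X Y : 'I_n -> 'M[K]_(p, q)) : lerpf 0 X Y = X.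
Proof. by apply: functional_extensionality => k; rewrite /lerpf lerp0. Qed.

Lemma lerpf1 n p q (X Y : 'I_n -> 'M[K]_(p, q)) : lerpf 1 X Y = Y.
Proof. by apply: functional_extensionality => k; rewrite /lerpf lerp1. Qed.

Lemma map_polyC_mx p q t (x : 'M[K]_(p, q)) : map_mx (horner_eval t) (map_mx polyC x) = x.
Proof. by apply/matrixP => i j; rewrite !mxE horner_evalE hornerC. Qed.

Lemma map_segment p q t (x y : 'M[K]_(p, q)) :
  map_mx (horner_eval t) (segment x y) = lerp t x y.
Proof.
by rewrite /segment map_mxD !map_mxZ !map_polyC_mx /= !horner_evalE !hornerE.
Qed.

Lemma det_segment p t (x y : 'M[K]_p) : (\det (segment x y)).[t] = \det (lerp t x y).
Proof. by rewrite -horner_evalE -det_map_mx map_segment. Qed.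

Lemma mxrow_lerp n r q t (X Y : 'I_n -> 'M[K]_(r, q)) :
  \mxrow_l lerpf t X Y l = lerp t (\mxrow_l X l) (\mxrow_l Y l).
Proof. by apply/matrixP => i j; rewrite !mxE. Qed.

Lemma commuting_data_lerp n r t b c c' D D' f :
  commuting_data b c D f -> commuting_data b c' D' f ->
  @commuting_data K n r b (lerpf t c c') (lerpf t D D') f.
Proof.
move=> comm comm' i j; case: (comm i j) (comm' i j) => bD cf Df [bD' cf' Df'].
by rewrite /lerpf /lerp; split; rewrite ?mulmxDr ?mulmxDl -?scalemxAr -?scalemxAl
  ?bD ?bD' ?cf ?cf' ?Df ?Df'.
Qed.

Lemma trivial_cokernel_segment n r q (Da Db : 'I_n -> 'M[K]_(r, q)) :
  trivial_cokernel Da -> trivial_cokernel Db ->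
  exists p : {poly K}, [/\ p.[0] != 0, p.[1] != 0 &
    forall t, p.[t] != 0 -> trivial_cokernel (lerpf t Da Db)].
Proof.
move=> /trivial_cokernel_row_free/row_freeP[Wa DWa] /trivial_cokernel_row_free/row_freeP[Wb DWb].
exists (\det (segment (\mxrow_l Da l) (\mxrow_l Db l) *m segment Wa Wb)).
have pE t : (\det (segment (\mxrow_l Da l) (\mxrow_l Db l) *m segment Wa Wb)).[t] =
            \det (\mxrow_l lerpf t Da Db l *m lerp t Wa Wb).
  by rewrite -horner_evalE -det_map_mx map_mxM !map_segment mxrow_lerp.
split=> [||t]; rewrite pE ?lerpf0 ?lerp0 ?DWa ?lerpf1 ?lerp1 ?DWb ?det1 ?oner_eq0 //.
rewrite -unitfE -unitmxE => unit_DW; apply/trivial_cokernel_row_free.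
by rewrite /row_free eqn_leq rank_leq_row -{1}(mxrank_unit unit_DW) mxrankM_maxl.
Qed.

End Segments.

Section XCurve.
Variables (K : fieldType) (n r s : nat).
Local Notation d := ((1 + r) + (n + 1))%N.

(* [blockform] is only defined over a field. *)
Definition poly_blockform (b : 'rV[{poly K}]_r) (c : 'rV[{poly K}]_n)
    (D : 'M[{poly K}]_(r, n)) (f : 'cV[{poly K}]_n) : 'M[{poly K}]_d :=
  block_mx (block_mx 0 b 0 0 : 'M_(1 + r, 1 + r))
           (block_mx c 0 D 0 : 'M_(1 + r, n + 1))
           0
           (block_mx 0 f 0 0 : 'M_(n + 1, n + 1)).

Lemma map_poly_blockform t b c D f :
  map_mx (horner_eval t) (poly_blockform b c D f) =
  blockform (map_mx (horner_eval t) b) (map_mx (horner_eval t) c)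
            (map_mx (horner_eval t) D) (map_mx (horner_eval t) f).
Proof. by rewrite /poly_blockform /blockform !map_block_mx !map_mx0. Qed.

Variables (Pa Pb : 'M[K]_d) (Ga Gb : 'M[K]_n) (ca cb : 'I_n -> 'rV[K]_n)
  (Da Db : 'I_n -> 'M[K]_(r, n)).

(* The inverse of [segment Pa Pb] is replaced by its adjugate; the curve is
   [rat_curve Xcurve_num (\det (segment Pa Pb))]. *)
Definition Xcurve_num : 'I_n -> 'M[{poly K}]_d := fun i =>
  let comb p q (X : 'I_n -> 'M[{poly K}]_(p, q)) := mxcomb (segment Ga Gb) X i in
  segment Pa Pb
  *m poly_blockform (comb _ _ (fun k => map_mx polyC (std_b s k)))
                    (comb _ _ (fun k => segment (ca k) (cb k)))
                    (comb _ _ (fun k => segment (Da k) (Db k)))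
                    (comb _ _ (fun k => map_mx polyC (std_f k)))
  *m \adj (segment Pa Pb).

Lemma rat_curve_Xparam t : \det (lerp t Pa Pb) != 0 ->
  rat_curve Xcurve_num (\det (segment Pa Pb)) t =
  Xparam s (lerp t Pa Pb) (lerp t Ga Gb) (lerpf t ca cb) (lerpf t Da Db).
Proof.
move=> det_neq0; apply: functional_extensionality => i.
rewrite /rat_curve /Xcurve_num /Xparam !map_mxM map_mx_adj map_poly_blockform !map_mxcomb.
have polyC_K p q (X : 'I_n -> 'M[K]_(p, q)) : (fun k => map_mx (horner_eval t) (map_mx polyC (X k))) = X.
  by apply: functional_extensionality => k; rewrite map_polyC_mx.
have segmentK p q (X Y : 'I_n -> 'M[K]_(p, q)) :
    (fun k => map_mx (horner_eval t) (segment (X k) (Y k))) = lerpf t X Y.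
  by apply: functional_extensionality => k; rewrite map_segment.
rewrite !polyC_K !segmentK !map_segment det_segment /invmx unitmxE unitfE det_neq0.
by rewrite scalemxAr.
Qed.

Lemma Xparams_joined : (s <= r)%N -> (s <= n)%N ->
  Pa \in unitmx -> Pb \in unitmx -> Ga \in unitmx -> Gb \in unitmx ->
  commuting_data (std_b s) ca Da std_f -> commuting_data (std_b s) cb Db std_f ->
  trivial_cokernel Da -> trivial_cokernel Db ->
  rat_curve_joins (Xnrs s) (Xparam s Pa Ga ca Da) (Xparam s Pb Gb cb Db).
Proof.
move=> sr sn Pa_unit Pb_unit Ga_unit Gb_unit comm_a comm_b cok_a cok_b.
have [pD [pD0 pD1 pD_cok]] := trivial_cokernel_segment cok_a cok_b.
have unit_det m (x : 'M[K]_m) : x \in unitmx -> \det x != 0 by rewrite -unitfE -unitmxE.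
exists Xcurve_num, (\det (segment Pa Pb)), (\det (segment Pa Pb) * \det (segment Ga Gb) * pD).
split.
- by rewrite !hornerM !det_segment !lerp0 !mulf_neq0 ?unit_det.
- by rewrite !hornerM !det_segment !lerp1 !mulf_neq0 ?unit_det.
- by rewrite rat_curve_Xparam !lerp0 ?lerpf0 ?unit_det.
- by rewrite rat_curve_Xparam !lerp1 ?lerpf1 ?unit_det.
- move=> t; rewrite !hornerM !det_segment !mulf_eq0 !negb_or => /andP[/andP[P_t G_t] D_t].
  split; first exact: P_t.
  rewrite rat_curve_Xparam //.
  apply: Xparam_Xnrs; [exact: sr | exact: sn | by rewrite unitmxE unitfE
    | by rewrite unitmxE unitfE | exact: commuting_data_lerp | exact: pD_cok].
Qed.

End XCurve.

Theorem lemma4p4 (K : closedFieldType) (hchar : [pchar K] =i pred0)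
  (n r s : nat) (hs1 : (1 <= s)%N) (hsr : (s <= r)%N) (hrn : (r <= n)%N) :
  zariski_irreducible (@Xnrs K n r s).
Proof.
apply: irreducible_of_rat_curves; first exact: Xnrs_nonempty.
move=> a b /Xnrs_Xparam[Pa [Ga [ca [Da [Pa_unit Ga_unit comm_a cok_a ->]]]]].
move=> /Xnrs_Xparam[Pb [Gb [cb [Db [Pb_unit Gb_unit comm_b cok_b ->]]]]].
exact: Xparams_joined (leq_trans hsr hrn) _ _ _ _ _ _ _ _.
Qed.
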